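(* Consider $N$ heterogeneous agents $x_i(k+1)=A_ix_i(k)+B_iu_i(k)$, $y_i(k)=C_ix_i(k)\in\mathbb{R}^p$, with local measurements $z_i(k)=C_i^mx_i(k)$, where for each $i$: $(A_i,B_i)$ stabilizable, $(C_i,A_i)$ detectable, $(C_i,A_i,B_i)$ right-invertible, $(C_i^m,A_i)$ detectable. Consider an exosystem $x_r(k+1)=A_rx_r(k)$, $y_r(k)=C_rx_r(k)$ with $(C_r,A_r)$ observable and all eigenvalues of $A_r$ in the closed unit disc. Let $(\check C_r,\check A_r,\check B_r)$ be a triple such that $\check x_r(k+1)=\check A_r\check x_r(k)$, $y_r(k)=\check C_r\check x_r(k)$ reproduces every output $y_r$ of the exosystem for a suitable initial condition, whose eigenvalues are those of $A_r$ together with possibly additional zeros, and which is invertible of uniform rank $n_q$ with no invariant zeros. Suppose for each $i$ a pre-compensator $\xi_i(k+1)=A_{i,h}\xi_i+B_{i,h}z_i+E_{i,h}v_i$, $u_i=C_{i,h}\xi_i+D_{i,h}v_i$ is given such that the interconnection reads $\bar x_i(k+1)=\check A_r\bar x_i(k)+\check B_r(v_i(k)+d_i(k))$, $y_i(k)=\check C_r\bar x_i(k)$, with $\omega_i(k+1)=A_{i,s}\omega_i(k)$, $d_i=C_{i,s}\omega_i$, $A_{i,s}$ Schur stable. Let $K,H$ be such that $\check A_r-\check B_rK$ and $\check A_r-H\check C_r$ are Schur stable, and apply the protocol $$\begin{aligned}\xi_i(k+1)&=A_{i,h}\xi_i(k)+B_{i,h}z_i(k)-E_{i,h}K\eta_i(k),\\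 \hat x_i(k+1)&=\check A_r\hat x_i(k)+H(\bar\zeta_i(k)-\check C_r\hat x_i(k))-\check B_rK\check\zeta_i(k),\\ \eta_i(k+1)&=(\check A_r-\check B_rK)\eta_i(k)+\check A_r\hat x_i(k)-\check A_r\check\zeta_i(k),\\ u_i(k)&=C_{i,h}\xi_i(k)-D_{i,h}K\eta_i(k),\end{aligned}$$ where $\bar\zeta_i(k)=\frac{1}{2+d_{in}(i)}\big(\sum_{j}a_{ij}(y_i(k)-y_j(k))+\iota_i(y_i(k)-y_r(k))\big)$ and $\check\zeta_i(k)=\eta_i(k)-\sum_j\bar d_{ij}\eta_j(k)$. Then for any nonempty node set $\mathscr C$, any $N$, any graph in $\mathbb{G}^N_{\mathscr C}$, all initial conditions and all exosystem initial conditions $x_r(0)$, regulated output synchronization holds: $\lim_{k\to\infty}(y_i(k)-y_r(k))=0$ for all $i$.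
   Context: The network is a weighted directed graph on nodes $\{1,\dots,N\}$ with adjacency matrix $[a_{ij}]$, $a_{ij}\ge0$, $a_{ii}=0$ ($a_{ij}>0$ means an edge from $j$ to $i$), Laplacian $L$ ($\ell_{ii}=\sum_k a_{ik}$, $\ell_{ij}=-a_{ij}$), and $D_{in}=\operatorname{diag}\{d_{in}(i)\}$ with $d_{in}(i)=\sum_ja_{ij}$. A nonempty node set $\mathscr C$ (root set) consists of agents that receive $y_i-y_r$; $\iota_i=1$ if $i\in\mathscr C$ and $0$ otherwise. $\mathbb{G}^N_{\mathscr C}$ is the set of graphs on $N$ nodes such that every node is a member of a directed tree whose root lies in $\mathscr C$. $\bar L=L+\operatorname{diag}\{\iota_i\}$ and $\bar D=[\bar d_{ij}]=I-(2I+D_{in})^{-1}\bar L$. Schur stable means all eigenvalues in the open unit disc. *)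

From HB Require Import structures.
From mathcomp Require Import all_boot all_order all_algebra.
From mathcomp Require Import complex.
From mathcomp Require Import all_classical all_reals all_analysis.

Set Implicit Arguments.
Unset Strict Implicit.
Unset Printing Implicit Defensive.

Import numFieldNormedType.Exports.
Import Order.TTheory GRing.Theory Num.Theory.
Local Open Scope ring_scope.

Section LinearSystems.
Variable R : realType.

Definition mxC (m n : nat) (A : 'M[R]_(m, n)) : 'M[R[i]]_(m, n) :=
  map_mx (fun x : R => (x%:C)%C) A.

Definition schur_stable (n : nat) (A : 'M[R]_n) : Prop :=
  forall z : R[i], eigenvalue (mxC A) z -> `|z| < 1.

Definition eigs_in_closed_disc (n : nat) (A : 'M[R]_n) : Prop :=
  forall z : R[i], eigenvalue (mxC A) z -> `|z| <= 1.

Definition stabilizable (n m : nat) (A : 'M[R]_n) (B : 'M[R]_(n, m)) : Prop :=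
  exists F : 'M[R]_(m, n), schur_stable (A + B *m F).

Definition detectable (n p : nat) (C : 'M[R]_(p, n)) (A : 'M[R]_n) : Prop :=
  exists L : 'M[R]_(n, p), schur_stable (A + L *m C).

Definition observable (n p : nat) (C : 'M[R]_(p, n)) (A : 'M[R]_n) : Prop :=
  forall x : 'cV[R]_n, (forall k : nat, C *m (A ^+ k) *m x = 0) -> x = 0.

Definition sysmx (n m p : nat) (C : 'M[R]_(p, n)) (A : 'M[R]_n)
  (B : 'M[R]_(n, m)) (z : R[i]) : 'M[R[i]]_(n + p, n + m) :=
  block_mx (z%:M - mxC A) (- mxC B) (mxC C) 0.

Definition normal_rank (n m p : nat) (C : 'M[R]_(p, n)) (A : 'M[R]_n)
  (B : 'M[R]_(n, m)) (r : nat) : Prop :=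
  (exists z : R[i], \rank (sysmx C A B z) = r) /\
  (forall z : R[i], (\rank (sysmx C A B z) <= r)%N).

(* (C,A,B) right-invertible: transfer matrix of full row (normal) rank p,
   i.e. normal rank of the system matrix equals n + p. *)
Definition right_invertible (n m p : nat) (C : 'M[R]_(p, n)) (A : 'M[R]_n)
  (B : 'M[R]_(n, m)) : Prop :=
  normal_rank C A B (n + p).

(* A square system (p inputs, p outputs) is invertible: transfer matrix of
   normal rank p (= number of inputs = number of outputs). *)
Definition invertible_sys (n p : nat) (C : 'M[R]_(p, n)) (A : 'M[R]_n)
  (B : 'M[R]_(n, p)) : Prop :=
  normal_rank C A B (n + p).

Definition invariant_zero (n m p : nat) (C : 'M[R]_(p, n)) (A : 'M[R]_n)
  (B : 'M[R]_(n, m)) (z : R[i]) : Prop :=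
  exists w : R[i], (\rank (sysmx C A B z) < \rank (sysmx C A B w))%N.

Definition no_invariant_zeros (n m p : nat) (C : 'M[R]_(p, n)) (A : 'M[R]_n)
  (B : 'M[R]_(n, m)) : Prop :=
  forall z : R[i], ~ invariant_zero C A B z.

(* Square system of uniform rank nq: all infinite zeros of order nq,
   i.e. C A^k B = 0 for k < nq - 1 and C A^(nq-1) B nonsingular. *)
Definition uniform_rank (n p : nat) (C : 'M[R]_(p, n)) (A : 'M[R]_n)
  (B : 'M[R]_(n, p)) (nq : nat) : Prop :=
  (0 < nq)%N /\
  (forall k : nat, (k < nq.-1)%N -> C *m (A ^+ k) *m B = 0) /\
  (C *m (A ^+ nq.-1) *m B) \in unitmx.

Definition reproduces_outputs (r nc p : nat) (Cr : 'M[R]_(p, r))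
  (Ar : 'M[R]_r) (Cc : 'M[R]_(p, nc)) (Ac : 'M[R]_nc) : Prop :=
  forall xr0 : 'cV[R]_r, exists xc0 : 'cV[R]_nc,
    forall k : nat, Cr *m (Ar ^+ k) *m xr0 = Cc *m (Ac ^+ k) *m xc0.

Definition eigs_those_plus_zeros (r nc : nat) (Ar : 'M[R]_r) (Ac : 'M[R]_nc)
  : Prop :=
  (forall z : R[i], eigenvalue (mxC Ar) z -> eigenvalue (mxC Ac) z) /\
  (forall z : R[i], eigenvalue (mxC Ac) z -> eigenvalue (mxC Ar) z \/ z = 0).

(* The interconnection of agent (A,B,C,Cm) with the pre-compensator
   (Ah,Bh,Eh,Ch,Dh), input v, state (x, xi), output y:
     x+  = A x + B Ch xi + B Dh v
     xi+ = Ah xi + Bh Cm x + Eh v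
     y   = C x
   reads, in new coordinates (xbar, omega) = (Tx, Tw) (x, xi)
   (an invertible change of coordinates with inverse [Px Pw]):
     xbar+  = Ac xbar + Bc (v + Cs omega),  omega+ = As omega,
     y = Cc xbar. *)
Definition interconnection_reads (n m q h s nc p : nat)
  (A : 'M[R]_n) (B : 'M[R]_(n, m)) (C : 'M[R]_(p, n)) (Cm : 'M[R]_(q, n))
  (Ah : 'M[R]_h) (Bh : 'M[R]_(h, q)) (Eh : 'M[R]_(h, p))
  (Ch : 'M[R]_(m, h)) (Dh : 'M[R]_(m, p))
  (Ac : 'M[R]_nc) (Bc : 'M[R]_(nc, p)) (Cc : 'M[R]_(p, nc))
  (As : 'M[R]_s) (Cs : 'M[R]_(p, s)) : Prop :=
  let Aint : 'M[R]_(n + h) := block_mx A (B *m Ch) (Bh *m Cm) Ah in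
  let Bint : 'M[R]_(n + h, p) := col_mx (B *m Dh) Eh in
  let Cint : 'M[R]_(p, n + h) := row_mx C 0 in
  exists (Tx : 'M[R]_(nc, n + h)) (Tw : 'M[R]_(s, n + h))
         (Px : 'M[R]_(n + h, nc)) (Pw : 'M[R]_(n + h, s)),
    Px *m Tx + Pw *m Tw = 1%:M /\ Tx *m Px = 1%:M /\ Tx *m Pw = 0 /\
    Tw *m Px = 0 /\ Tw *m Pw = 1%:M /\
    Tx *m Aint = Ac *m Tx + Bc *m Cs *m Tw /\ Tx *m Bint = Bc /\
    Tw *m Aint = As *m Tw /\ Tw *m Bint = 0 /\
    Cint = Cc *m Tx.

End LinearSystems.

Section Graph.
Variable R : realType.
Variable N : nat.

(* adjacency a : a i j > 0 means an edge from j to i *)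
Definition edge_rel (a : 'M[R]_N) : rel 'I_N := fun j i => 0 < a i j.

(* Graph in G^N_C: every node is a member of a directed tree whose root
   lies in C, i.e. every node is reachable by a directed path from C. *)
Definition in_graph_set (a : 'M[R]_N) (Cset : {set 'I_N}) : Prop :=
  forall i : 'I_N, exists2 c, c \in Cset & connect (edge_rel a) c i.

Definition din (a : 'M[R]_N) (i : 'I_N) : R := \sum_(j < N) a i j.

Definition iota_C (Cset : {set 'I_N}) (i : 'I_N) : R :=
  if i \in Cset then 1 else 0.

Definition laplacian (a : 'M[R]_N) : 'M[R]_N :=
  \matrix_(i, j) (if i == j then din a i else - a i j).

Definition Lbar (a : 'M[R]_N) (Cset : {set 'I_N}) : 'M[R]_N :=
  laplacian a + diag_mx (\row_i iota_C Cset i).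

Definition Dbar (a : 'M[R]_N) (Cset : {set 'I_N}) : 'M[R]_N :=
  1%:M - invmx (2%:M + diag_mx (\row_i din a i)) *m Lbar a Cset.

Definition zeta_bar (p : nat) (a : 'M[R]_N) (Cset : {set 'I_N})
  (y : 'I_N -> 'cV[R]_p) (yr : 'cV[R]_p) (i : 'I_N) : 'cV[R]_p :=
  (2 + din a i)^-1 *:
    (\sum_(j < N) a i j *: (y i - y j) + iota_C Cset i *: (y i - yr)).

Definition zeta_check (nc : nat) (a : 'M[R]_N) (Cset : {set 'I_N})
  (eta : 'I_N -> 'cV[R]_nc) (i : 'I_N) : 'cV[R]_nc :=
  eta i - \sum_(j < N) Dbar a Cset i j *: eta j.

End Graph.

From HB Require Import structures.
From mathcomp Require Import all_boot all_order all_algebra.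
From mathcomp Require Import complex.
From mathcomp Require Import all_classical all_reals all_analysis.
From mathcomp Require Import ring lra.
Import numFieldNormedType.Exports.
Import Order.TTheory GRing.Theory Num.Theory.
Local Open Scope ring_scope.
Local Open Scope classical_set_scope.

(* After the pre-compensators, every agent reads as the common triple
   (Cc, Ac, Bc) driven by its protocol input plus a disturbance generated by a
   Schur stable system, and the exosystem output is the free output of
   (Cc, Ac).  In these coordinates the tracking errors xt_j, the observer
   errors xh_j - sum_l (1 - Dbar)_jl xt_l and the disagreements xt_j - eta_j
   satisfy a cascade of linear recursions whose homogeneous parts are Ac - H Cc,
   the "Kronecker" map X |-> Ac X Dbar^T and Ac - Bc K.  Since Dbar is Schur
   stable for graphs in G^N_C and the eigenvalues of Ac lie in the closed unit
   disc, each stage is stable and all errors vanish. *)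

Set Implicit Arguments.
Unset Strict Implicit.
Unset Printing Implicit Defensive.

Section RealNullSequences.
Variable R : realType.
Implicit Types u v b : nat -> R.

Lemma cvg0_le u v : (forall k, `|u k| <= `|v k|) ->
  v @ \oo --> 0 -> u @ \oo --> 0.
Proof.
move=> uv /cvgr0Pnorm_le v0; apply/cvgr0Pnorm_le => e e0.
by apply: filterS (v0 e e0) => k; apply: le_trans.
Qed.

Lemma cvg0D u v : u @ \oo --> 0 -> v @ \oo --> 0 ->
  (fun k => u k + v k) @ \oo --> 0.
Proof. by move=> u0 v0; rewrite -[0 : R]addr0; exact: cvgD. Qed.

Lemma cvg0Ml (c : R) u : u @ \oo --> 0 -> (fun k => c * u k) @ \oo --> 0.
Proof. by move=> u0; rewrite -(mulr0 c); exact: cvgMl_tmp. Qed.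

(* Discrete Gronwall lemma: u(k+1) <= q u(k) + b(k) with 0 <= q < 1 and
   b -> 0 forces u -> 0.  After time K, where b is below (1 - q) e/2, the
   solution stays below q^(k-K) u(K) + e/2, and q^(k-K) -> 0. *)
Lemma cvg0_contraction u b (q : R) : 0 <= q < 1 -> (forall k, 0 <= u k) ->
  (forall k, u k.+1 <= q * u k + b k) -> b @ \oo --> 0 -> u @ \oo --> 0.
Proof.
move=> /andP[q0 q1] u0 urec /cvgr0Pnorm_le b0; apply/cvgr0Pnorm_le => e e0.
have e2 : 0 < e / 2 by rewrite divr_gt0.
have c0 : 0 < (1 - q) * (e / 2) by rewrite mulr_gt0 // subr_gt0.
have [K _ bK] := b0 _ c0.
have bound j : u (K + j)%N <= q ^+ j * u K + e / 2.
  elim: j => [|j IH]; first by rewrite addn0 expr0 mul1r lerDl ltW.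
  have bKj : b (K + j)%N <= (1 - q) * (e / 2).
    by rewrite (le_trans (ler_norm _)) // bK //= leq_addr.
  rewrite addnS (le_trans (urec _)) // (le_trans (lerD (ler_wpM2l q0 IH) bKj)) //.
  by rewrite exprS; lra.
have uK : 0 < u K + 1 by rewrite ltr_wpDl.
have /cvgr0Pnorm_le/(_ _ (divr_gt0 e2 uK)) [J _ qJ] :=
  @cvg_expr _ q ltac:(by rewrite ger0_norm).
exists (K + J)%N => // k /= kKJ.
have Kk : (K <= k)%N by apply: leq_trans kKJ; rewrite leq_addr.
rewrite -(subnKC Kk) ger0_norm // (le_trans (bound _)) //.
have qk : q ^+ (k - K) * (u K + 1) <= e / 2.
  rewrite -ler_pdivlMr //; have := qJ (k - K)%N; rewrite /= ger0_norm ?exprn_ge0 //.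
  by apply; rewrite leq_subRL // addnC.
have : q ^+ (k - K) * u K <= q ^+ (k - K) * (u K + 1).
  by rewrite ler_wpM2l ?exprn_ge0 // lerDl.
by lra.
Qed.

End RealNullSequences.

Section ComplexNullSequences.
Variable R : realType.
Local Notation C := R[i].
Import Normc.

Lemma normcE (z : C) : (normc z)%:C%C = `|z|.
Proof. by case: z => x y; rewrite normc_def. Qed.

Lemma normc_ge0 (z : C) : 0 <= normc z.
Proof. by case: z => x y; exact: sqrtr_ge0. Qed.

Lemma normc_real (x : R) : normc (x%:C)%C = `|x|.
Proof. by rewrite /normc /= expr0n /= addr0 sqrtr_sqr. Qed.

Lemma normc_lt1 (z : C) : `|z| < 1 -> normc z < 1.
Proof. by rewrite -normcE ltcR. Qed.

Definition cnull (z : nat -> C) := (fun k => normc (z k)) @ \oo --> (0 : R).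

Lemma cnull0 : cnull (fun _ => 0).
Proof. by rewrite /cnull normc0; exact: cvg_cst. Qed.

Lemma cnullD (z w : nat -> C) : cnull z -> cnull w -> cnull (fun k => z k + w k).
Proof.
move=> z0 w0; apply: cvg0_le (cvg0D z0 w0) => k.
by rewrite !ger0_norm ?addr_ge0 ?normc_ge0 ?le_normcD.
Qed.

Lemma cnullM (c : C) (z : nat -> C) : cnull z -> cnull (fun k => c * z k).
Proof. by move=> z0; rewrite /cnull; under eq_fun do rewrite normcM; exact: cvg0Ml. Qed.

Lemma cnull_sum (I : finType) (z : I -> nat -> C) :
  (forall i, cnull (z i)) -> cnull (fun k => \sum_i z i k).
Proof.
move=> z0; elim: (index_enum I) => [|j s IH].
  by under eq_fun do rewrite big_nil; exact: cnull0.
by under eq_fun do rewrite big_cons; exact: cnullD.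
Qed.

Lemma cnull_contraction (z w : nat -> C) (t : C) : `|t| < 1 ->
  (forall k, z k.+1 = t * z k + w k) -> cnull w -> cnull z.
Proof.
move=> t1 zrec w0; apply: (cvg0_contraction (q := normc t)) w0.
- by rewrite normc_ge0 normc_lt1.
- by move=> k; exact: normc_ge0.
- by move=> k; rewrite zrec (le_trans (le_normcD _ _)) // normcM.
Qed.

Definition mnull m n (Z : nat -> 'M[C]_(m, n)) := forall i j, cnull (fun k => Z k i j).

Section MatrixNullSequences.
Variables m n : nat.
Implicit Types Z W : nat -> 'M[C]_(m, n).

Lemma mnull0 : mnull (fun _ => 0 : 'M[C]_(m, n)).
Proof. by move=> i j; under eq_fun do rewrite mxE; exact: cnull0. Qed.

Lemma mnullD Z W : mnull Z -> mnull W -> mnull (fun k => Z k + W k).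
Proof. by move=> Z0 W0 i j; under eq_fun do rewrite mxE; exact: cnullD. Qed.

Lemma mnullZ (c : C) Z : mnull Z -> mnull (fun k => c *: Z k).
Proof. by move=> Z0 i j; under eq_fun do rewrite mxE; exact: cnullM. Qed.

Lemma mnullN Z : mnull Z -> mnull (fun k => - Z k).
Proof.
by move=> /(mnullZ (-1)); congr mnull; apply/funext => k; rewrite scaleN1r.
Qed.

Lemma mnull_sum (I : finType) (Z : I -> nat -> 'M[C]_(m, n)) :
  (forall l, mnull (Z l)) -> mnull (fun k => \sum_l Z l k).
Proof.
by move=> Z0 i j; under eq_fun do rewrite summxE; apply: cnull_sum => l; exact: Z0.
Qed.

Lemma mnull_mull p (A : 'M[C]_(p, m)) Z : mnull Z -> mnull (fun k => A *m Z k).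
Proof.
move=> Z0 i j; under eq_fun do rewrite mxE.
by apply: cnull_sum => l; exact: cnullM.
Qed.

Lemma mnull_mulr p (A : 'M[C]_(n, p)) Z : mnull Z -> mnull (fun k => Z k *m A).
Proof.
move=> Z0 i j; under eq_fun do rewrite mxE; under eq_fun do under eq_bigr do rewrite mulrC.
by apply: cnull_sum => l; exact: cnullM.
Qed.

End MatrixNullSequences.

End ComplexNullSequences.

Section Eigenvalues.
Variable F : fieldType.

Lemma eigenvalue_det n (A : 'M[F]_n) a : eigenvalue A a = (\det (a%:M - A) == 0).
Proof.
apply/eigenvalueP/det0P => [[v Av_av v_nz] | [v v_nz Av_av]]; exists v => //.
  by rewrite mulmxBr Av_av mul_mx_scalar subrr.
by apply/eqP; rewrite -mul_mx_scalar eq_sym -subr_eq0 -mulmxBr Av_av.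
Qed.

Lemma eigenvalue_trmx n (A : 'M[F]_n) a : eigenvalue A^T a = eigenvalue A a.
Proof. by rewrite !eigenvalue_det -det_tr linearB /= tr_scalar_mx trmxK. Qed.

Lemma eigenvalue_trig_diag n (T : 'M[F]_n) i : is_trig_mx T -> eigenvalue T (T i i).
Proof.
move=> Ttrig; rewrite eigenvalue_root_char char_poly_trig // rootE.
by rewrite horner_prod (bigD1 i) //= hornerXsubC subrr mul0r.
Qed.

Lemma eigenvalue_conj n (P M : 'M[F]_n) a : P \in unitmx ->
  eigenvalue (conjmx P M) a -> eigenvalue M a.
Proof.
move=> Pu; apply: eigenvalue_conjmx; last by rewrite row_free_unit.
by rewrite submx_full // row_full_unit.
Qed.

End Eigenvalues.

Section LinearRecursions.
Variable R : realType.
Local Notation C := R[i].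

(* z(k+1) = T z(k) + w(k) with T lower triangular and contracting diagonal:
   by induction on the row index, each coordinate obeys a scalar contracting
   recursion driven by the (already null) previous coordinates. *)
Lemma trig_recursion_null n (T : 'M[C]_n) (z w : nat -> 'cV[C]_n) :
  is_trig_mx T -> (forall i, `|T i i| < 1) ->
  (forall k, z k.+1 = T *m z k + w k) -> mnull w -> mnull z.
Proof.
move=> /is_trig_mxP Ttrig Tdiag zrec w0.
suff zi : forall b (i : 'I_n), (i < b)%N -> cnull (fun k => z k i 0).
  by move=> i j; rewrite (ord1 j); apply: (zi n).
elim=> [//|b IH] i ib.
pose u k := \sum_l (if l != i then T i l * z k l 0 else 0) + w k i 0.
apply: (@cnull_contraction _ _ u (T i i) (Tdiag i)).
  move=> k; rewrite zrec !mxE (bigD1 i) //= addrA; congr (_ + _ + _).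
  by rewrite big_mkcond.
apply: cnullD; last exact: w0.
apply: cnull_sum => l; have [li|] := ltnP l i.
  by rewrite neq_ltn li; apply: cnullM; apply: IH; rewrite (leq_trans li).
rewrite leq_eqVlt => /orP[/eqP/val_inj ->|il]; first by rewrite eqxx; exact: cnull0.
by under eq_fun do rewrite Ttrig // mul0r if_same; exact: cnull0.
Qed.

(* z(k+1) = M z(k) + w(k) with M Schur stable: triangularize M by a unitary
   similarity (Schur decomposition) and apply the triangular case. *)
Lemma schur_recursion_null n (M : 'M[C]_n) (z w : nat -> 'cV[C]_n) :
  (forall a, eigenvalue M a -> `|a| < 1) ->
  (forall k, z k.+1 = M *m z k + w k) -> mnull w -> mnull z.
Proof.
move=> Mstab zrec w0; case: n => [|n] in M z w Mstab zrec w0 *; first by case.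
have [P /unitarymx_unit Pu Ptrig] := @Schur _ _ M (ltn0Sn n).
have TP : conjmx P M *m P = P *m M by rewrite conjumx // mulmxKV.
have Pz0 : mnull (fun k => P *m z k).
  apply: (@trig_recursion_null _ (conjmx P M) _ (fun k => P *m w k) Ptrig).
  - by move=> i; apply: Mstab; apply: (eigenvalue_conj Pu); exact: eigenvalue_trig_diag.
  - by move=> k; rewrite zrec mulmxDr mulmxA -TP mulmxA.
  - exact: mnull_mull.
have := mnull_mull (invmx P) Pz0; congr mnull; apply/funext => k.
by rewrite mulmxA mulVmx // mul1mx.
Qed.

(* Column a of the solution of Y(k+1) = S Y(k) T^T + W(k) obeys the vector
   recursion with matrix (T a a) S, driven by the columns b < a. *)
Lemma trig_sylvester_null n N (S : 'M[C]_n) (T : 'M[C]_N) (Y W : nat -> 'M[C]_(n, N)) :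
  is_trig_mx S -> is_trig_mx T ->
  (forall c, `|S c c| <= 1) -> (forall a, `|T a a| < 1) ->
  (forall k, Y k.+1 = S *m Y k *m T^T + W k) -> mnull W -> mnull Y.
Proof.
move=> Strig Ttrig Sdiag Tdiag Yrec W0.
suff Ycol a : mnull (fun k => col a (Y k)).
  by move=> i a; have := Ycol a i 0; congr cnull; apply/funext => k; rewrite mxE.
have [b] := ubnP a; elim: b a => [//|b IH] a ab.
pose u k := \sum_l (if l != a then T a l *: (S *m col l (Y k)) else 0) + col a (W k).
apply: (trig_recursion_null (T := T a a *: S) (w := u)).
- by apply/is_trig_mxP => i j ij; rewrite mxE (is_trig_mxP Strig) // mulr0.
- move=> c; rewrite mxE normrM (le_lt_trans _ (Tdiag a)) //.
  by rewrite ler_piMr ?normr_ge0.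
- move=> k; have colS l : S *m col l (Y k) = col l (S *m Y k) by rewrite !colE mulmxA.
  rewrite /u; under eq_bigr do rewrite colS.
  rewrite -scalemxAl colS Yrec; apply/colP => c.
  rewrite !mxE summxE (bigD1 a) //= [in RHS](bigD1 a) //= eqxx.
  rewrite (_ : (0 : 'cV[C]_n) c 0 = 0) ?mxE // add0r -!addrA.
  congr (_ + _); first by rewrite mulrC.
  congr (_ + _); apply: eq_bigr => l la; rewrite la !mxE mulrC.
  by congr (_ * _); apply: eq_bigr => j _; rewrite !mxE.
- apply: mnullD; last first.
    by move=> i j; have := W0 i a; congr cnull; apply/funext => k; rewrite !mxE.
  apply: mnull_sum => l; have [la|] := ltnP l a.
    rewrite (_ : l != a) ?neq_ltn ?la //.
    by apply: mnullZ; apply: mnull_mull; apply: IH; rewrite (leq_trans la).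
  rewrite leq_eqVlt => /orP[/eqP/val_inj ->|al]; first by rewrite eqxx; exact: mnull0.
  by under eq_fun do rewrite (is_trig_mxP Ttrig) // scale0r if_same; exact: mnull0.
Qed.

(* Y(k+1) = A Y(k) D^T + W(k) with the eigenvalues of A in the closed unit
   disc and D Schur stable: triangularize A and D simultaneously on both
   sides by unitary similarities. *)
Lemma sylvester_recursion_null n N (A : 'M[C]_n) (D : 'M[C]_N) (Y W : nat -> 'M[C]_(n, N)) :
  (forall a, eigenvalue A a -> `|a| <= 1) ->
  (forall a, eigenvalue D a -> `|a| < 1) ->
  (forall k, Y k.+1 = A *m Y k *m D^T + W k) -> mnull W -> mnull Y.
Proof.
move=> Adisc Dstab Yrec W0.
case: n => [|n] in A Y W Adisc Yrec W0 *; first by case.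
case: N => [|N] in D Y W Dstab Yrec W0 *; first by move=> ? [].
have [Q /unitarymx_unit Qu Qtrig] := @Schur _ _ A (ltn0Sn n).
have [P /unitarymx_unit Pu Ptrig] := @Schur _ _ D (ltn0Sn N).
have SQ : conjmx Q A *m Q = Q *m A by rewrite conjumx // mulmxKV.
have TP : conjmx P D *m P = P *m D by rewrite conjumx // mulmxKV.
have QYP : mnull (fun k => Q *m Y k *m P^T).
  apply: (trig_sylvester_null Qtrig Ptrig (W := fun k => Q *m W k *m P^T)).
  - by move=> c; apply: Adisc; apply: (eigenvalue_conj Qu); exact: eigenvalue_trig_diag.
  - by move=> a; apply: Dstab; apply: (eigenvalue_conj Pu); exact: eigenvalue_trig_diag.
  - move=> k; rewrite Yrec mulmxDr mulmxDl; congr (_ + _).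
    rewrite !mulmxA SQ -!mulmxA; congr (_ *m (_ *m _)).
    by rewrite -!trmx_mul TP.
  - by apply: mnull_mulr; apply: mnull_mull.
have := mnull_mulr (invmx P^T) (mnull_mull (invmx Q) QYP); congr mnull.
by apply/funext => k; rewrite !mulmxA mulVmx // mul1mx mulmxK // unitmx_tr.
Qed.

End LinearRecursions.

Lemma connect_invariant (T : finType) (e : rel T) (P : pred T) x y :
  (forall u v, e u v -> P u -> P v) -> connect e x y -> P x -> P y.
Proof.
move=> eP /connectP [p pth ->]; elim: p x pth => //= w p IH x /andP [exw pw] Px.
exact: IH pw (eP _ _ exw Px).
Qed.

Section SubstochasticMatrices.
Variables (R : realType) (N : nat) (D : 'M[R]_N).
Local Notation C := R[i].
Import Normc.
Hypothesis D_ge0 : forall i j, 0 <= D i j.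
Hypothesis D_rowsum : forall i, \sum_j D i j <= 1.

(* Let v be an eigenvector of D for an eigenvalue z with |z| >= 1.  At an
   index i where |v| is maximal, the triangle inequality is an equality:
   row i of D sums to 1 and every l feeding into i has maximal |v l| too. *)
Lemma max_modulus_row (v : 'I_N -> C) (z : C) i :
  \sum_l (D i l)%:C%C * v l = z * v i -> 1 <= normc z ->
  0 < normc (v i) -> (forall l, normc (v l) <= normc (v i)) ->
  \sum_l D i l = 1 /\ forall l, 0 < D i l -> normc (v l) = normc (v i).
Proof.
move=> Dv z1 vi0 vmax; set m := normc (v i) in vi0 vmax *.
have lower : m <= \sum_l D i l * normc (v l).
  rewrite (le_trans (ler_peMl (normc_ge0 _) z1)) // -normcM -Dv.
  elim/big_ind2: _ => [|x1 x2 y1 y2 h1 h2|l _]; first by rewrite normc0.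
    by rewrite (le_trans (le_normcD _ _)) ?lerD.
  by rewrite normcM normc_real ger0_norm.
set s := \sum_l D i l * (m - normc (v l)).
have s0 : 0 <= s by apply: sumr_ge0 => l _; rewrite mulr_ge0 ?subr_ge0.
have upper : \sum_l D i l * normc (v l) = m * \sum_l D i l - s.
  by rewrite mulr_sumr /s -sumrB; apply: eq_bigr => l _; ring.
have rs := D_rowsum i; rewrite upper in lower.
have rs1 : \sum_l D i l = 1.
  by apply/eqP; rewrite eq_le rs /= -(ler_pM2l vi0) mulr1; lra.
split=> // l Dl.
have : s == 0 by rewrite eq_le s0 andbT; move: lower; rewrite rs1 mulr1; lra.
rewrite /s psumr_eq0 => [|j _]; last by rewrite mulr_ge0 ?subr_ge0.
move=> /allP /(_ l (mem_index_enum _)) /implyP /(_ isT).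
by rewrite mulf_eq0 (gt_eqF Dl) /= subr_eq0 => /eqP.
Qed.

Definition support_edge : rel 'I_N := fun j i => 0 < D i j.

(* If every index is reached, along the support graph, from a row with sum
   strictly less than 1, then D is Schur stable: otherwise the set of indices
   of maximal modulus of an eigenvector would be closed backwards under edges
   (max_modulus_row) and would hence contain such a leaking row. *)
Lemma substochastic_schur_stable :
  (forall i, exists2 c, \sum_j D c j < 1 & connect support_edge c i) ->
  forall z : C, eigenvalue (mxC D) z -> `|z| < 1.
Proof.
move=> leak z; rewrite -eigenvalue_trmx => /eigenvalueP [v vD vn0].
have Dv j : \sum_l (D j l)%:C%C * v 0 l = z * v 0 j.
  have := congr1 (fun M : 'rV[C]_N => M 0 j) vD; rewrite !mxE => <-.
  by apply: eq_bigr => l _; rewrite !mxE mulrC.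
have [j0 vj0] : exists j0, v 0 j0 != 0.
  apply/existsP; apply: contraR vn0; rewrite negb_exists => /forallP v0.
  by apply/eqP/rowP => j; rewrite mxE; apply/eqP; have := v0 j; rewrite negbK.
pose i0 := [arg max_(i > j0) normc (v 0 i)]%O.
have vmax l : normc (v 0 l) <= normc (v 0 i0).
  by rewrite /i0; case: arg_maxP => // i _; apply.
have vi0 : 0 < normc (v 0 i0).
  rewrite (lt_le_trans _ (vmax j0)) // lt_neqAle normc_ge0 andbT eq_sym.
  by apply: contra vj0 => /eqP /eq0_normc ->.
rewrite -normcE -[1 : C]/((1 : R)%:C)%C ltcR ltNge; apply/negP => z1.
pose S := [pred i | normc (v 0 i) == normc (v 0 i0)].
have maxS i : S i -> \sum_l D i l = 1 /\ forall l, 0 < D i l -> S l.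
  move=> /eqP Si; have vi : 0 < normc (v 0 i) by rewrite Si.
  have [l|rs1 eqS] := max_modulus_row (Dv i) z1 vi; first by rewrite Si.
  by split=> // l /eqS; rewrite /S inE Si => ->.
have [c c_leak ci0] := leak i0.
have : ~~ S i0.
  apply: (connect_invariant (P := fun u => ~~ S u) _ ci0) => [u w /= Dwu|].
    by apply: contra => /maxS [_]; apply.
  by apply/negP => /maxS [rs1]; move: c_leak; rewrite rs1 ltxx.
by rewrite inE eqxx.
Qed.

End SubstochasticMatrices.

Section DiffusiveSums.
Variables (R : pzRingType) (V : lmodType R).

Lemma sum_delta (I : finType) (j : I) (f : I -> V) :
  \sum_l ((j == l)%:R : R) *: f l = f j.
Proof.
rewrite (bigD1 j) //= eqxx scale1r big1 ?addr0 // => l /negPf.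
by rewrite eq_sym => ->; rewrite scale0r.
Qed.

Lemma sum_id_minus N (M : 'M[R]_N) (f : 'I_N -> V) j :
  \sum_l (1%:M - M) j l *: f l = f j - \sum_l M j l *: f l.
Proof.
under eq_bigr do rewrite [_ j _]mxE [1%:M j _]mxE mxE scalerBl.
by rewrite sumrB sum_delta.
Qed.

End DiffusiveSums.

Section GraphMatrices.
Variables (R : realType) (N : nat) (a : 'M[R]_N) (Cset : {set 'I_N}).
Hypothesis a_ge0 : forall i j, 0 <= a i j.
Hypothesis a_diag : forall i, a i i = 0.

Local Notation deg i := (2 + din a i).
Local Notation Lb := (Lbar a Cset).
Local Notation Db := (Dbar a Cset).

Lemma deg_gt0 i : 0 < deg i.
Proof. by rewrite ltr_wpDr //; apply: sumr_ge0 => j _. Qed.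

Lemma iota_C01 i : 0 <= iota_C R Cset i <= 1.
Proof. by rewrite /iota_C; case: ifP; rewrite ?lexx ?ler01. Qed.

Lemma Lbar_entry i j : Lb i j = (i == j)%:R * (din a i + iota_C R Cset i) - a i j.
Proof.
rewrite /Lbar /laplacian !mxE; case: (eqVneq i j) => [->|ij].
  by rewrite a_diag subr0 mul1r mulr1n.
by rewrite mul0r sub0r mulr0n addr0.
Qed.

Lemma Dbar_complement_entry i j : (1%:M - Db) i j = (deg i)^-1 * Lb i j.
Proof.
have inv_deg : invmx (2%:M + diag_mx (\row_i din a i)) = diag_mx (\row_i (deg i)^-1).
  set X := _ + _; set Y := diag_mx _.
  have YX : Y *m X = 1%:M.
    apply/matrixP => k l; rewrite /X /Y mul_diag_mx !mxE.
    case: (eqVneq k l) => [->|kl]; last by rewrite !mulr0n addr0 mulr0.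
    by rewrite !mulr1n mulVf // gt_eqF // deg_gt0.
  have [_ Xu] := mulmx1_unit YX.
  by rewrite -[LHS]mul1mx -YX -mulmxA mulmxV // mulmx1.
by rewrite /Dbar opprB addrC subrK inv_deg mul_diag_mx !mxE.
Qed.

Lemma Dbar_entry i j : Db i j = (i == j)%:R - (deg i)^-1 * Lb i j.
Proof. by rewrite -Dbar_complement_entry !mxE subKr. Qed.

Lemma Dbar_ge0 i j : 0 <= Db i j.
Proof.
rewrite Dbar_entry Lbar_entry; case: (eqVneq i j) => [->|ij].
  rewrite a_diag subr0 mul1r subr_ge0 ler_pdivrMl ?deg_gt0 // mulr1.
  by rewrite [2 + _]addrC lerD2l; have /andP[_ /le_trans->] := iota_C01 j; rewrite ?ler1n.
by rewrite mul0r !sub0r mulrN opprK mulr_ge0 ?invr_ge0 ?a_ge0 // ltW // deg_gt0.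
Qed.

Lemma Dbar_gt0 i j : 0 < a i j -> 0 < Db i j.
Proof.
move=> aij; have ij : i != j by apply: contraTneq aij => ->; rewrite a_diag ltxx.
rewrite Dbar_entry Lbar_entry (negPf ij) mul0r !sub0r mulrN opprK.
by rewrite mulr_gt0 ?invr_gt0 ?deg_gt0.
Qed.

(* Row i of Dbar sums to 1 - iota_i / (2 + d_in(i)): strictly less than 1
   exactly at the root nodes. *)
Lemma Dbar_rowsum i : \sum_j Db i j = 1 - iota_C R Cset i / deg i.
Proof.
have delta (c : R) : \sum_j (i == j)%:R * c = c by exact: (sum_delta (V := R^o)).
under eq_bigr do rewrite Dbar_entry Lbar_entry.
rewrite sumrB -mulr_sumr sumrB delta.
rewrite (_ : \sum_j (i == j)%:R = 1 :> R); last first.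
  by rewrite -[RHS](delta 1); apply: eq_bigr => j _; rewrite mulr1.
rewrite -/(din a i).
by rewrite [din a i + _]addrC addrK mulrC.
Qed.

Lemma Dbar_schur_stable : in_graph_set a Cset ->
  forall z, eigenvalue (mxC Db) z -> `|z| < 1.
Proof.
move=> graph; apply: substochastic_schur_stable.
- exact: Dbar_ge0.
- move=> i; rewrite Dbar_rowsum lerBlDr lerDl divr_ge0 //.
    by have /andP[] := iota_C01 i.
  exact/ltW/deg_gt0.
- move=> i; have [c cC ci] := graph i; exists c.
    by rewrite Dbar_rowsum /iota_C cC ltrBlDr ltrDl divr_gt0 ?deg_gt0.
  by apply: connect_sub ci => u v /Dbar_gt0 Dvu; apply: connect1.
Qed.

Lemma zeta_check_E nc (eta : 'I_N -> 'cV[R]_nc) i :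
  zeta_check a Cset eta i = \sum_l (1%:M - Db) i l *: eta l.
Proof. by rewrite sum_id_minus. Qed.

(* zeta_bar is the normalized Laplacian applied to the errors y_l - y_r,
   since the root terms iota_i (y_i - y_r) are the diagonal part of Lbar. *)
Lemma zeta_bar_E p (y : 'I_N -> 'cV[R]_p) (yr : 'cV[R]_p) i :
  zeta_bar a Cset y yr i = \sum_l (1%:M - Db) i l *: (y l - yr).
Proof.
under [RHS]eq_bigr do rewrite Dbar_complement_entry Lbar_entry -scalerA.
rewrite -scaler_sumr; congr (_ *: _).
under [RHS]eq_bigr do rewrite scalerBl -scalerA.
rewrite sumrB sum_delta scalerDl.
have -> : \sum_l a i l *: (y i - y l) = \sum_l a i l *: ((y i - yr) - (y l - yr)).
  by apply: eq_bigr => l _; rewrite opprB addrA subrK.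
under eq_bigr do rewrite scalerBr.
by rewrite sumrB -scaler_suml addrAC.
Qed.

End GraphMatrices.

Section RealMatrixNullSequences.
Variable R : realType.

Definition rnull m n (v : nat -> 'M[R]_(m, n)) := mnull (fun k => mxC (v k)).

Lemma mxCE m n (A : 'M[R]_(m, n)) : mxC A = map_mx (real_complex R) A.
Proof. by []. Qed.

Variables m n : nat.
Implicit Types v w : nat -> 'M[R]_(m, n).

Lemma rnull0 : rnull (fun _ => 0 : 'M[R]_(m, n)).
Proof. by rewrite /rnull; under eq_fun do rewrite mxCE map_mx0; exact: mnull0. Qed.

Lemma rnullD v w : rnull v -> rnull w -> rnull (fun k => v k + w k).
Proof. by rewrite /rnull => v0 w0; under eq_fun do rewrite mxCE map_mxD; exact: mnullD. Qed.

Lemma rnullN v : rnull v -> rnull (fun k => - v k).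
Proof. by rewrite /rnull => v0; under eq_fun do rewrite mxCE map_mxN; exact: mnullN. Qed.

Lemma rnullB v w : rnull v -> rnull w -> rnull (fun k => v k - w k).
Proof. by move=> v0 w0; apply: rnullD (rnullN w0). Qed.

Lemma rnullZ (c : R) v : rnull v -> rnull (fun k => c *: v k).
Proof. by rewrite /rnull => v0; under eq_fun do rewrite mxCE map_mxZ; exact: mnullZ. Qed.

Lemma rnullM p (A : 'M[R]_(p, m)) v : rnull v -> rnull (fun k => A *m v k).
Proof. by rewrite /rnull => v0; under eq_fun do rewrite mxCE map_mxM; exact: mnull_mull. Qed.

Lemma rnull_sum (I : finType) (v : I -> nat -> 'M[R]_(m, n)) :
  (forall l, rnull (v l)) -> rnull (fun k => \sum_l v l k).
Proof. by rewrite /rnull => v0; under eq_fun do rewrite mxCE map_mx_sum; exact: mnull_sum. Qed.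

Lemma rnull_cvg v : rnull v -> v @ \oo --> (0 : 'M[R]_(m, n)).
Proof.
move=> v0; apply/cvgr0Pnorm_le => e e0.
have entries (ij : 'I_m * 'I_n) : \forall k \near \oo, `|v k ij.1 ij.2| <= e.
  have := v0 ij.1 ij.2; rewrite /cnull => /cvgr0Pnorm_le /(_ e e0).
  by apply: filterS => k; rewrite mxE normc_real normr_id.
apply: filterS (filter_forall _ entries) => k vk.
rewrite [`|_|]mx_normrE; apply/bigmax_leP; split; [exact: ltW | by move=> ij _; apply: vk].
Qed.

End RealMatrixNullSequences.

Section RealLinearRecursions.
Variable R : realType.

Lemma rnull_schur n (M : 'M[R]_n) (z w : nat -> 'cV[R]_n) :
  schur_stable M -> (forall k, z k.+1 = M *m z k + w k) -> rnull w -> rnull z.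
Proof.
move=> Mstab zrec; apply: schur_recursion_null Mstab _ => k.
by rewrite zrec !mxCE map_mxD map_mxM.
Qed.

(* u_j(k+1) = A (sum_l D j l u_l(k)) + w_j(k): the columns u_j form a matrix
   obeying the Sylvester recursion U(k+1) = A U(k) D^T + W(k). *)
Lemma network_recursion_null N n (A : 'M[R]_n) (D : 'M[R]_N)
    (u w : 'I_N -> nat -> 'cV[R]_n) :
  eigs_in_closed_disc A -> schur_stable D ->
  (forall j k, u j k.+1 = A *m (\sum_l D j l *: u l k) + w j k) ->
  (forall j, rnull (w j)) -> forall j, rnull (u j).
Proof.
move=> Adisc Dstab urec w0.
pose U k := \matrix_(r, l) u l k r 0 : 'M[R]_(n, N).
pose W k := \matrix_(r, l) w l k r 0 : 'M[R]_(n, N).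
have Urec k : U k.+1 = A *m U k *m D^T + W k.
  apply/matrixP => r l; rewrite -mulmxA !mxE urec !mxE; congr (_ + _).
  apply: eq_bigr => c _; rewrite !mxE summxE; congr (_ * _).
  by apply: eq_bigr => j _; rewrite !mxE mulrC.
have U0 : rnull U.
  apply: (sylvester_recursion_null Adisc Dstab (W := fun k => mxC (W k))).
    by move=> k; rewrite Urec !mxCE map_mxD !map_mxM map_trmx.
  by move=> r l; have := w0 l r 0; congr cnull; apply/funext => k; rewrite !mxE.
by move=> j r c; rewrite (ord1 c); have := U0 r j; congr cnull; apply/funext => k; rewrite !mxE.
Qed.

End RealLinearRecursions.

Section ClosedLoopErrors.
Variables (R : realType) (N nc p : nat).
Variables (Ac : 'M[R]_nc) (Bc : 'M[R]_(nc, p)) (Cc : 'M[R]_(p, nc)).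
Variables (K : 'M[R]_(p, nc)) (H : 'M[R]_(nc, p)) (D : 'M[R]_N).
Hypothesis Ac_disc : eigs_in_closed_disc Ac.
Hypothesis K_stab : schur_stable (Ac - Bc *m K).
Hypothesis H_stab : schur_stable (Ac - H *m Cc).
Hypothesis D_stab : schur_stable D.

(* Tracking errors xt_j = xbar_j - xc of the agents (in the coordinates where
   they all read as the triple (Cc, Ac, Bc)), disturbances dd_j, and the
   protocol states xh_j, eta_j; sumM f j is the diffusive combination of f
   with weights 1 - D. *)
Variables (xt xh eta : 'I_N -> nat -> 'cV[R]_nc) (dd : 'I_N -> nat -> 'cV[R]_p).
Let sumM d (f : 'I_N -> 'cV[R]_d) j := \sum_l (1%:M - D) j l *: f l.

Hypothesis xt_rec : forall j k,
  xt j k.+1 = Ac *m xt j k - Bc *m K *m eta j k + Bc *m dd j k.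
Hypothesis xh_rec : forall j k,
  xh j k.+1 = Ac *m xh j k + H *m (Cc *m sumM (xt^~ k) j - Cc *m xh j k)
              - Bc *m K *m sumM (eta^~ k) j.
Hypothesis eta_rec : forall j k,
  eta j k.+1 = (Ac - Bc *m K) *m eta j k + Ac *m xh j k - Ac *m sumM (eta^~ k) j.
Hypothesis dd_null : forall j, rnull (dd j).

Lemma sumD_E d (f : 'I_N -> 'cV[R]_d) j : \sum_l D j l *: f l = f j - sumM f j.
Proof. by rewrite /sumM sum_id_minus opprB addrC subrK. Qed.

Lemma sumM_xt_rec j k : sumM (xt^~ k.+1) j =
  Ac *m sumM (xt^~ k) j - Bc *m K *m sumM (eta^~ k) j + Bc *m sumM (dd^~ k) j.
Proof.
rewrite /sumM; under eq_bigr do rewrite xt_rec scalerDr scalerBr !scalemxAr.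
by rewrite !big_split /= sumrN -!mulmx_sumr.
Qed.

(* The observer error xh_j - sumM xt_j is driven only by the disturbances. *)
Lemma observer_error_null j : rnull (fun k => xh j k - sumM (xt^~ k) j).
Proof.
apply: (rnull_schur H_stab (w := fun k => - (Bc *m sumM (dd^~ k) j))).
  move=> k; rewrite xh_rec sumM_xt_rec !(mulmxBr, mulmxBl, mulmxDr, mulmxN, mulmxA).
  by apply/matrixP => r c; rewrite !mxE; ring.
by apply/rnullN/rnullM; apply: rnull_sum => l; exact: rnullZ.
Qed.

(* The disagreement xt_j - eta_j between agent and protocol state diffuses
   over the network through Dbar, driven by disturbances and observer errors. *)
Lemma disagreement_null j : rnull (fun k => xt j k - eta j k).
Proof.
pose w j k := Bc *m dd j k - Ac *m (xh j k - sumM (xt^~ k) j).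
move: j; apply: (network_recursion_null (u := fun j k => xt j k - eta j k) (w := w)
  Ac_disc D_stab) => [j k|j].
  have sumD : \sum_l D j l *: (xt l k - eta l k)
      = (xt j k - eta j k) - (sumM (xt^~ k) j - sumM (eta^~ k) j).
    rewrite sumD_E /sumM -sumrB; congr (_ - _); apply: eq_bigr => l _; exact: scalerBr.
  rewrite sumD xt_rec eta_rec /w !(mulmxBr, mulmxBl, mulmxDr, mulmxN, mulmxA).
  by apply/matrixP => r c; rewrite !mxE; ring.
by apply: rnullB; [exact: rnullM | apply: rnullM; exact: observer_error_null].
Qed.

Lemma tracking_error_null j : rnull (xt j).
Proof.
apply: (rnull_schur K_stab (w := fun k => Bc *m K *m (xt j k - eta j k) + Bc *m dd j k)).
  move=> k; rewrite xt_rec !(mulmxBr, mulmxBl, mulmxDr, mulmxN, mulmxA).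
  by apply/matrixP => r c; rewrite !mxE; ring.
by apply: rnullD; apply: rnullM; [exact: disagreement_null | exact: dd_null].
Qed.

End ClosedLoopErrors.

Lemma exosystem_reproduced (R : realType) r nc p (Ar : 'M[R]_r) (Cr : 'M[R]_(p, r))
    (Ac : 'M[R]_nc) (Cc : 'M[R]_(p, nc)) (xr : nat -> 'cV[R]_r) :
  reproduces_outputs Cr Ar Cc Ac -> (forall k, xr k.+1 = Ar *m xr k) ->
  exists xc : nat -> 'cV[R]_nc,
    (forall k, xc k.+1 = Ac *m xc k) /\ forall k, Cr *m xr k = Cc *m xc k.
Proof.
move=> rep xr_rec; have [xc0 xc0E] := rep (xr 0%N).
exists (fun k => Ac ^+ k *m xc0); split => k; first by rewrite exprS mulmxA.
have -> : xr k = Ar ^+ k *m xr 0%N.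
  by elim: k => [|k IH]; rewrite ?expr0 ?mul1mx // xr_rec IH exprS mulmxA.
by rewrite mulmxA xc0E mulmxA.
Qed.

Lemma agent_as_check_triple (R : realType) n m q h s nc p
    (A : 'M[R]_n) (B : 'M[R]_(n, m)) (C : 'M[R]_(p, n)) (Cm : 'M[R]_(q, n))
    (Ah : 'M[R]_h) (Bh : 'M[R]_(h, q)) (Eh : 'M[R]_(h, p))
    (Ch : 'M[R]_(m, h)) (Dh : 'M[R]_(m, p))
    (Ac : 'M[R]_nc) (Bc : 'M[R]_(nc, p)) (Cc : 'M[R]_(p, nc))
    (As : 'M[R]_s) (Cs : 'M[R]_(p, s))
    (x : nat -> 'cV[R]_n) (xi : nat -> 'cV[R]_h) (v : nat -> 'cV[R]_p) :
  interconnection_reads A B C Cm Ah Bh Eh Ch Dh Ac Bc Cc As Cs ->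
  schur_stable As ->
  (forall k, x k.+1 = A *m x k + B *m (Ch *m xi k + Dh *m v k)) ->
  (forall k, xi k.+1 = Ah *m xi k + Bh *m (Cm *m x k) + Eh *m v k) ->
  exists (xb : nat -> 'cV[R]_nc) (d : nat -> 'cV[R]_p),
    [/\ rnull d, forall k, xb k.+1 = Ac *m xb k + Bc *m v k + Bc *m d k
       & forall k, C *m x k = Cc *m xb k].
Proof.
move=> [Tx [Tw [_ [_ [_ [_ [_ [_ [_ [TxA [TxB [TwA [TwB CE]]]]]]]]]]]]] As_stab x_rec xi_rec.
pose w k := col_mx (x k) (xi k).
have w_rec k : w k.+1 = block_mx A (B *m Ch) (Bh *m Cm) Ah *m w k
                        + col_mx (B *m Dh) Eh *m v k.
  rewrite /w x_rec xi_rec mul_block_col mul_col_mx add_col_mx; congr col_mx.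
    by rewrite mulmxDr !mulmxA addrA.
  by rewrite mulmxA [Bh *m Cm *m x k + _]addrC.
exists (fun k => Tx *m w k), (fun k => Cs *m (Tw *m w k)); split.
- apply: rnullM; apply: (rnull_schur As_stab (w := fun _ => 0)); last exact: rnull0.
  by move=> k; rewrite w_rec mulmxDr !mulmxA TwA TwB mul0mx !addr0.
- by move=> k /=; rewrite w_rec mulmxDr !mulmxA TxA TxB mulmxDl addrAC.
- by move=> k; rewrite mulmxA -CE /w mul_row_col mul0mx addr0.
Qed.

Lemma check_triple_closed_disc (R : realType) r nc (Ar : 'M[R]_r) (Ac : 'M[R]_nc) :
  eigs_in_closed_disc Ar -> eigs_those_plus_zeros Ar Ac -> eigs_in_closed_disc Ac.
Proof.
move=> Ar_disc [_ Ac_eigs] z /Ac_eigs [/Ar_disc //|->].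
by rewrite normr0 ler01.
Qed.

Theorem theorem4
  (R : realType) (N : nat)
  (* agent dimensions: state n i, input m i, measurement q i,
     pre-compensator state h i, disturbance-generator state s i *)
  (n m q h s : 'I_N -> nat)
  (* output dimension p, exosystem dimension r, dimension nc of the
     check-triple, its uniform rank nq *)
  (p r nc nq : nat)
  (* agents *)
  (A : forall i, 'M[R]_(n i)) (B : forall i, 'M[R]_(n i, m i))
  (C : forall i, 'M[R]_(p, n i)) (Cm : forall i, 'M[R]_(q i, n i))
  (* exosystem *)
  (Ar : 'M[R]_r) (Cr : 'M[R]_(p, r))
  (* check triple (Cc, Ac, Bc) *)
  (Ac : 'M[R]_nc) (Bc : 'M[R]_(nc, p)) (Cc : 'M[R]_(p, nc))
  (* pre-compensators *)
  (Ah : forall i, 'M[R]_(h i)) (Bh : forall i, 'M[R]_(h i, q i))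
  (Eh : forall i, 'M[R]_(h i, p)) (Ch : forall i, 'M[R]_(m i, h i))
  (Dh : forall i, 'M[R]_(m i, p))
  (* disturbance generators *)
  (As : forall i, 'M[R]_(s i)) (Cs : forall i, 'M[R]_(p, s i))
  (* gains *)
  (K : 'M[R]_(p, nc)) (H : 'M[R]_(nc, p)) :
  (* assumptions on the agents *)
  (forall i, stabilizable (A i) (B i)) ->
  (forall i, detectable (C i) (A i)) ->
  (forall i, right_invertible (C i) (A i) (B i)) ->
  (forall i, detectable (Cm i) (A i)) ->
  (* assumptions on the exosystem *)
  observable Cr Ar ->
  eigs_in_closed_disc Ar ->
  (* assumptions on the check triple *)
  reproduces_outputs Cr Ar Cc Ac ->
  eigs_those_plus_zeros Ar Ac ->
  invertible_sys Cc Ac Bc ->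
  uniform_rank Cc Ac Bc nq ->
  no_invariant_zeros Cc Ac Bc ->
  (* pre-compensators *)
  (forall i, interconnection_reads (A i) (B i) (C i) (Cm i)
               (Ah i) (Bh i) (Eh i) (Ch i) (Dh i) Ac Bc Cc (As i) (Cs i)) ->
  (forall i, schur_stable (As i)) ->
  (* gains *)
  schur_stable (Ac - Bc *m K) ->
  schur_stable (Ac - H *m Cc) ->
  (* any nonempty root set, any graph in G^N_C *)
  forall (Cset : {set 'I_N}) (a : 'M[R]_N),
  Cset != finset.set0 ->
  (forall i j, 0 <= a i j) ->
  (forall i, a i i = 0) ->
  in_graph_set a Cset ->
  (* any closed-loop trajectory (= any initial conditions) *)
  forall (x : forall i, nat -> 'cV[R]_(n i))
         (xi : forall i, nat -> 'cV[R]_(h i))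
         (xh eta : 'I_N -> nat -> 'cV[R]_nc)
         (xr : nat -> 'cV[R]_r),
  let y := fun i k => C i *m x i k in
  let yr := fun k => Cr *m xr k in
  (forall k, xr k.+1 = Ar *m xr k) ->
  (forall i k, x i k.+1 =
      A i *m x i k + B i *m (Ch i *m xi i k - Dh i *m K *m eta i k)) ->
  (forall i k, xi i k.+1 =
      Ah i *m xi i k + Bh i *m (Cm i *m x i k) - Eh i *m K *m eta i k) ->
  (forall i k, xh i k.+1 =
      Ac *m xh i k
      + H *m (zeta_bar a Cset (fun j => y j k) (yr k) i - Cc *m xh i k)
      - Bc *m K *m zeta_check a Cset (fun j => eta j k) i) ->
  (forall i k, eta i k.+1 =
      (Ac - Bc *m K) *m eta i k + Ac *m xh i k
      - Ac *m zeta_check a Cset (fun j => eta j k) i) ->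
  forall i, (fun k => y i k - yr k) @ \oo --> (0 : 'cV[R]_p).
Proof.
move=> _ _ _ _ _ Ar_disc rep eigs _ _ _ inter As_stab K_stab H_stab.
move=> Cset a _ a_ge0 a_diag graph x xi xh eta xr y yr xr_rec x_rec xi_rec xh_rec eta_rec i.
have [xc [xc_rec yrE]] := exosystem_reproduced rep xr_rec.
have agent j : exists (xb : nat -> 'cV[R]_nc) (d : nat -> 'cV[R]_p),
    [/\ rnull d, forall k, xb k.+1 = Ac *m xb k + Bc *m (- (K *m eta j k)) + Bc *m d k
       & forall k, y j k = Cc *m xb k].
  by apply: (agent_as_check_triple (xi := xi j) (inter j) (As_stab j)) => k;
    rewrite ?x_rec ?xi_rec mulmxN !mulmxA.
move: agent => /fin_all_exists [xb /fin_all_exists [d agentE]].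
pose xt j k := xb j k - xc k.
have yE j k : y j k - yr k = Cc *m xt j k.
  by have [_ _ ->] := agentE j; rewrite /yr yrE mulmxBr.
suff xt_null : rnull (xt i).
  have -> : (fun k => y i k - yr k) = (fun k => Cc *m xt i k).
    by apply/funext => k; rewrite yE.
  exact: rnull_cvg (rnullM Cc xt_null).
apply: (tracking_error_null (check_triple_closed_disc Ar_disc eigs) K_stab H_stab
          (Dbar_schur_stable a_ge0 a_diag graph) (xh := xh) (eta := eta) (dd := d))
  => [j k|j k|j k|j].
- have [_ xb_rec _] := agentE j.
  rewrite /xt xb_rec xc_rec mulmxN mulmxBr !mulmxA.
  by apply/matrixP => i1 i2; rewrite !mxE; ring.
- rewrite xh_rec (zeta_bar_E _ a_ge0 a_diag) zeta_check_E; congr (_ + _ *m (_ - _) - _).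
  by rewrite mulmx_sumr; apply: eq_bigr => l _; rewrite yE scalemxAr.
- by rewrite eta_rec zeta_check_E.
- by have [] := agentE j.
Qed.
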